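(* Assume $\mathrm{recc}(C)\subseteq\mathrm{recc}(P^B)$. Fix $k\in N_2$ and assume $N_0\not\subseteq J$. If $M'=\emptyset$, then $\mathrm{cl}\,\mathrm{conv}(P^B\setminus S_k^C)=P^B$.
   Context: Let $A\in\mathbb{R}^{m\times n}$ have full row rank, $b\in\mathbb{R}^m$, and $P=\{x\in\mathbb{R}^n_+:Ax=b\}$. Let $C\subseteq\mathbb{R}^n$ be an open convex set. Fix a basis $B$ of $P$ with nonbasic set $N=\{1,\dots,n\}\setminus B$. Write $P=\{x:x_i=\bar b_i-\sum_{j\in N}\bar a_{ij}x_j\ (i\in B),\ x\ge0\}$ with $\bar b\ge0$. The basic solution $\bar x$ has $\bar x_i=\bar b_i$ ($i\in B$) and $0$ ($i\in N$). $P^B$ is obtained by dropping $x_i\ge0$ for $i\in B$. For $j\in N$, $\bar r^j$ has $\bar r^j_k=-\bar a_{kj}$ ($k\in B$), $\bar r^j_j=1$, and $0$ otherwise. Thus $P^B=\{\bar x+\sum_{j\in N}x_j\bar r^j:x_j\ge0\}$. It is assumed that $\bar x\notin\mathrm{cl}(C)$. For $j\in N$, $\alpha_j=\inf\{\lambda\ge0:\bar x+\lambda\bar r^j\in C\}$ and $\beta_j=\sup\{\lambda\ge0:\bar x+\lambda\bar r^j\in C\}$, with $\alpha_j=+\infty$, $\beta_j=-\infty$ if the halfline misses $C$. Define - $N_0=\{j:\alpha_j=+\infty,\beta_j=-\infty\}$; - $N_2=\{j:\alpha_j\in(0,\infty),\beta_j\in(\alpha_j,\infty)\}$. For a set $K$,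 $\mathrm{recc}(K)=\{d:x+\lambda d\in K\ \forall x\in K,\lambda\ge0\}$. For $k\in N_2$, $S_k^C=\{\bar x\}+\mathrm{conv}\big(\bigcup_{j\in N_2}\{\lambda\bar r^j:0\le\lambda<\beta_j\}\big)+\{\lambda\bar r^k:\lambda\le0\}+\mathrm{recc}(C)$. Let $J=\{i\in N:\bar r^i\in\mathrm{recc}(S_k^C)\}$. For $i\in J$, $j\in N\setminus J$, $\gamma'_{ij}=\sup\{\gamma\ge0:\bar r^i+\gamma\bar r^j\in\mathrm{recc}(S_k^C)\}$. Let $M'=\{i\in J:\gamma'_{ij}>0\ \forall j\in N\setminus J\}$. Here $\mathrm{cl}\,\mathrm{conv}$ is the closure of the convex hull. *)

From HB Require Import structures.
From mathcomp Require Import all_boot all_order all_algebra.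
From mathcomp Require Import all_classical all_reals all_analysis.
Set Implicit Arguments.
Unset Strict Implicit.
Unset Printing Implicit Defensive.
Import Order.TTheory GRing.Theory Num.Theory.
Import numFieldNormedType.Exports.
Local Open Scope classical_set_scope.
Local Open Scope ring_scope.

Section Defs.
Variable R : realType.

Definition recc (V : lmodType R) (K : set V) : set V :=
  [set d | forall x, K x -> forall lam : R, 0 <= lam -> K (x + lam *: d)].

Definition convhull (V : lmodType R) (X : set V) : set V :=
  [set x | exists (p : nat) (w : 'I_p -> R) (y : 'I_p -> V),
     (forall i, 0 <= w i) /\ \sum_(i < p) w i = 1 /\
     (forall i, X (y i)) /\ x = \sum_(i < p) w i *: y i].

Variable n : nat.
(* The basis B is given as a subset of {0..n-1}; N = ~: B.
   The tableau data: bbar i (i in B), abar i j (i in B, j in N). *)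
Variables (B : {set 'I_n}) (abar : 'I_n -> 'I_n -> R) (bbar : 'I_n -> R).

Definition xbar : 'cV[R]_n := \col_i (if i \in B then bbar i else 0).

Definition rbar (j : 'I_n) : 'cV[R]_n :=
  \col_k (if k \in B then - abar k j else if k == j then 1 else 0).

(* P^B : drop the nonnegativity constraints of the basic variables *)
Definition PB (m : nat) (A : 'M[R]_(m, n)) (b : 'cV[R]_m) : set 'cV[R]_n :=
  [set x | A *m x = b /\ forall j, j \in ~: B -> 0 <= x j 0].

Variable C : set 'cV[R]_n.

Definition hitset (j : 'I_n) : set R :=
  [set lam | 0 <= lam /\ C (xbar + lam *: rbar j)].

(* inf / sup in the extended reals; empty set gives +oo / -oo *)
Definition alpha (j : 'I_n) : \bar R := ereal_inf (EFin @` hitset j).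
Definition beta (j : 'I_n) : \bar R := ereal_sup (EFin @` hitset j).

Definition N0 : set 'I_n :=
  [set j | j \in ~: B /\ alpha j = +oo%E /\ beta j = -oo%E].

Definition N2 : set 'I_n :=
  [set j | j \in ~: B /\ (0 < alpha j)%E /\ (alpha j < +oo)%E /\
           (alpha j < beta j)%E /\ (beta j < +oo)%E].

Definition segs : set 'cV[R]_n :=
  [set v | exists j lam, N2 j /\ 0 <= lam /\ (lam%:E < beta j)%E /\
                        v = lam *: rbar j].

Definition SkC (k : 'I_n) : set 'cV[R]_n :=
  [set x | exists c (mu : R) d, convhull segs c /\ mu <= 0 /\ recc C d /\
           x = xbar + c + mu *: rbar k + d].

Definition Jset (k : 'I_n) : set 'I_n :=
  [set i | i \in ~: B /\ recc (SkC k) (rbar i)].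

Definition gamma' (k i j : 'I_n) : \bar R :=
  ereal_sup (EFin @` [set g : R | 0 <= g /\ recc (SkC k) (rbar i + g *: rbar j)]).

Definition M' (k : 'I_n) : set 'I_n :=
  [set i | Jset k i /\
     forall j, j \in ~: B -> ~ Jset k j -> (0 < gamma' k i j)%E].

End Defs.

From HB Require Import structures.
From mathcomp Require Import all_boot all_order all_algebra.
From mathcomp Require Import all_classical all_reals all_analysis.
From mathcomp Require Import ring lra.

(* P^B is closed and convex, hence contains cl conv (P^B \ S_k^C).  Conversely,
   a point of S_k^C is xbar + c + mu rbar^k + d with d in recc C, mu <= 0 and the
   nonbasic coordinates of c in [0, U], where U bounds the finite beta_j.  So if
   xbar + L rbar^i lies in S_k^C for some L > U, the direction rbar^i is
   recovered from d, i.e. i is in J (for i = k one gets rbar^k in recc C, which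
   contradicts beta_k < +oo).  Hence for L > U the points xbar + L rbar^j
   (j not in J), xbar + L rbar^j + (U + 1) rbar^sigma(j) (j in J, where
   M' = set0 provides sigma(j) not in J with gamma'_{j sigma(j)} = 0) and
   xbar + eps rbar^i0 (i0 in N0 \ J, any eps > 0) all avoid S_k^C.  Writing
   x in P^B as xbar + sum_j x_j rbar^j, the convex combination of these points
   with weights x_j / L and 1 - sum_j x_j / L equals x + O(1/L), so x lies in
   the closure. *)

Set Implicit Arguments.
Unset Strict Implicit.
Unset Printing Implicit Defensive.
Import Order.TTheory GRing.Theory Num.Theory.
Import numFieldNormedType.Exports.
Local Open Scope classical_set_scope.
Local Open Scope ring_scope.

Section ReccCone.
Variables (R : realType) (V : lmodType R) (K : set V).

Lemma recc0 : recc K 0.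
Proof. by move=> x Kx lam _; rewrite scaler0 addr0. Qed.

Lemma reccD d e : recc K d -> recc K e -> recc K (d + e).
Proof. by move=> Kd Ke x Kx lam lam0; rewrite scalerDr addrA; apply/Ke/lam0/Kd. Qed.

Lemma reccZ s d : 0 <= s -> recc K d -> recc K (s *: d).
Proof. by move=> s0 Kd x Kx lam lam0; rewrite scalerA; apply/Kd/mulr_ge0. Qed.

End ReccCone.

Lemma convhull_sum (R : realType) (V : lmodType R) (X : set V) (I : finType)
    (w : I -> R) (y : I -> V) :
  (forall i, 0 <= w i) -> \sum_i w i = 1 -> (forall i, X (y i)) ->
  convhull X (\sum_i w i *: y i).
Proof.
move=> w_ge0 w1 Xy; exists #|I|, (w \o enum_val), (y \o enum_val).
split; [by move=> i; apply: w_ge0 | split; [|split; [by move=> i; apply: Xy|]]].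
  by rewrite -(big_enum_val (A := I) w).
by rewrite -(big_enum_val (A := I) (fun i => w i *: y i)).
Qed.

Lemma convhull_sum_add_point (R : realType) (V : lmodType R) (X : set V)
    (I : finType) (w : I -> R) (y : I -> V) (w0 : R) (y0 : V) :
  (forall i, 0 <= w i) -> 0 <= w0 -> \sum_i w i + w0 = 1 ->
  (forall i, X (y i)) -> X y0 ->
  convhull X (\sum_i w i *: y i + w0 *: y0).
Proof.
move=> w_ge0 w0_ge0 w1 Xy Xy0.
pose w' (o : I + 'I_1) := if o is inl i then w i else w0.
pose y' (o : I + 'I_1) := if o is inl i then y i else y0.
have := @convhull_sum _ _ X _ w' y'; rewrite !big_sumType !big_ord1; apply.
- by case.
- exact: w1.
- by case.
Qed.

Lemma closure_shrinking_ray (R : realType) (V : normedModType R) (E : set V)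
    (x g : V) (L0 : R) :
  (forall L, L0 < L -> E (x + L^-1 *: g)) -> closure E x.
Proof.
move=> Eray U /nbhs_ballP[e /= e_gt0 eU].
have g1e_gt0 : 0 < (`|g| + 1) / e by rewrite divr_gt0 // ltr_wpDl.
set L : R := `|L0| + (`|g| + 1) / e.
have L0L : L0 < L by rewrite (le_lt_trans (ler_norm L0)) // ltrDl.
have L_gt0 : 0 < L by rewrite ltr_wpDl.
exists (x + L^-1 *: g); split; first exact: Eray.
apply: eU; rewrite -ball_normE /= opprD addrA subrr add0r normrN normrZ.
rewrite ger0_norm ?invr_ge0 ?ltW // mulrC ltr_pdivrMr // mulrDr.
rewrite mulrCA divff ?gt_eqF // mulr1.
by have := mulr_ge0 (ltW e_gt0) (normr_ge0 L0); lra.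
Qed.

Section PBClosedConvex.
Variables (R : realType) (m n : nat) (A : 'M[R]_(m, n)) (b : 'cV[R]_m).
Variable B : {set 'I_n}.

Local Notation P := (PB B A b).

Lemma convhull_PB (X : set 'cV[R]_n) : X `<=` P -> convhull X `<=` P.
Proof.
move=> XP x [p [w [y [w_ge0 [w1 [Xy ->]]]]]]; split.
  rewrite mulmx_sumr (eq_bigr (fun i => w i *: b)) => [|i _].
    by rewrite -scaler_suml w1 scale1r.
  by rewrite -scalemxAr (XP _ (Xy i)).1.
move=> l lN; rewrite summxE sumr_ge0 // => i _; rewrite mxE mulr_ge0 //.
exact: (XP _ (Xy i)).2.
Qed.

Lemma closed_PB : closed P.
Proof.
have -> : P = \bigcap_(i in setT) [set x | (A *m x) i 0 = b i 0] `&`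
              \bigcap_(j in [set j | j \in ~: B]) [set x | 0 <= x j 0].
  apply/seteqP; split=> x [Ax x_ge0]; split=> //.
  - by move=> i _ /=; rewrite Ax.
  - by apply/matrixP => i z; rewrite ord1; exact: Ax.
have rowA_continuous i : continuous (fun x : 'cV[R]_n => (A *m x) i 0).
  have -> : (fun x : 'cV[R]_n => (A *m x) i 0) =
            (fun x => \sum_(j < n) A i j * x j 0) by apply/funext => x; rewrite mxE.
  apply: (@continuous_big R _ +%R 0 xpredT add_continuous _ (index_enum 'I_n)
            (fun j (x : 'cV[R]_n) => A i j * x j 0)) => j _ x.
  by apply: continuousM; [exact: cst_continuous | exact: coord_continuous].
apply: closedI; apply: closed_bigI => i _.
  apply: (@preimage_closed _ _ (fun x : 'cV[R]_n => (A *m x) i 0) [set y | y = b i 0]).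
    by move=> x _; exact: rowA_continuous.
  exact: closed_eq.
apply: (@preimage_closed _ _ (fun x : 'cV[R]_n => x i 0) [set y | 0 <= y]).
  by move=> x _; exact: coord_continuous.
exact: closed_ge.
Qed.

Lemma closure_convhull_PB (X : set 'cV[R]_n) :
  X `<=` P -> closure (convhull X) `<=` P.
Proof.
move=> XP x /(closureS (convhull_PB XP)).
by rewrite -(closure_id _).1 //; exact: closed_PB.
Qed.

End PBClosedConvex.

Section Tableau.
Variables (R : realType) (m n : nat) (A : 'M[R]_(m, n)) (b : 'cV[R]_m).
Variables (B : {set 'I_n}) (abar : 'I_n -> 'I_n -> R) (bbar : 'I_n -> R).
Hypothesis tableauP : forall x : 'cV[R]_n, A *m x = b <->
  (forall i, i \in B -> x i 0 = bbar i - \sum_(j in ~: B) abar i j * x j 0).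

Local Notation xb := (xbar B bbar).
Local Notation r := (rbar B abar).
Local Notation P := (PB B A b).

Lemma xbar_nonbasic l : l \in ~: B -> xb l 0 = 0.
Proof. by rewrite inE mxE => /negbTE ->. Qed.

Lemma rbar_nonbasic j l : l \in ~: B -> r j l 0 = (l == j)%:R.
Proof. by rewrite inE mxE => /negbTE ->; case: eqP. Qed.

Lemma xbarD_nonbasic (v : 'cV[R]_n) l : l \in ~: B -> (xb + v) l 0 = v l 0.
Proof. by move=> lN; rewrite mxE xbar_nonbasic ?add0r. Qed.

Lemma rbarD_nonbasic (a c : R) i j l : l \in ~: B ->
  (a *: r i + c *: r j) l 0 = a * (l == i)%:R + c * (l == j)%:R.
Proof. by move=> lN; rewrite mxE; congr (_ + _); rewrite mxE rbar_nonbasic. Qed.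

Lemma mulmx_xbar : A *m xb = b.
Proof.
apply/tableauP => i iB; rewrite mxE iB big1 ?subr0 // => j jN.
by rewrite xbar_nonbasic // mulr0.
Qed.

Lemma kerP (u : 'cV[R]_n) : A *m u = 0 <->
  (forall i, i \in B -> u i 0 = - \sum_(j in ~: B) abar i j * u j 0).
Proof.
have translateE : A *m u = 0 <-> A *m (xb + u) = b.
  rewrite mulmxDr mulmx_xbar; split=> [-> | /(congr1 (fun v => v - b))].
    by rewrite addr0.
  by rewrite addrC addKr subrr.
have sumE i : \sum_(j in ~: B) abar i j * (xb + u) j 0 =
              \sum_(j in ~: B) abar i j * u j 0.
  by apply: eq_bigr => j jN; rewrite xbarD_nonbasic.
split=> [/translateE/tableauP uB i iB | uB].
  by have := uB i iB; rewrite sumE !mxE iB; lra.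
apply/translateE/tableauP => i iB; rewrite sumE !mxE iB uB //; lra.
Qed.

Lemma mulmx_rbar j : j \in ~: B -> A *m r j = 0.
Proof.
move=> jN; apply/kerP => i iB; rewrite mxE iB (bigD1 j) //= big1 ?addr0.
  by rewrite rbar_nonbasic // eqxx mulr1.
by move=> l /andP[lN lj]; rewrite rbar_nonbasic // (negbTE lj) mulr0.
Qed.

Lemma ker_sum (u : 'cV[R]_n) : A *m u = 0 -> u = \sum_(j in ~: B) u j 0 *: r j.
Proof.
move=> /kerP uB; apply/matrixP => i z; rewrite ord1 summxE.
under eq_bigr do rewrite mxE.
case: (boolP (i \in B)) => iB.
  rewrite uB // -sumrN; apply: eq_bigr => j _; rewrite mxE iB; lra.
have iN : i \in ~: B by rewrite inE.
rewrite (bigD1 i) //= big1 ?addr0 => [|j /andP[_ ji]].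
  by rewrite rbar_nonbasic // eqxx mulr1.
by rewrite rbar_nonbasic // eq_sym (negbTE ji) mulr0.
Qed.

Lemma ker_rbar (u : 'cV[R]_n) j : A *m u = 0 -> j \in ~: B ->
  (forall l, l \in ~: B -> l != j -> u l 0 = 0) -> u = u j 0 *: r j.
Proof.
move=> Au jN u0; rewrite {1}(ker_sum Au) (bigD1 j) //= big1 ?addr0 //.
by move=> l /andP[lN lj]; rewrite u0 // scale0r.
Qed.

Lemma PB_xbarD (v : 'cV[R]_n) :
  A *m v = 0 -> (forall l, l \in ~: B -> 0 <= v l 0) -> P (xb + v).
Proof.
move=> Av v_ge0; split; first by rewrite mulmxDr mulmx_xbar Av addr0.
by move=> l lN; rewrite xbarD_nonbasic // v_ge0.
Qed.

Lemma PB_sum (x : 'cV[R]_n) : P x -> x = xb + \sum_(j in ~: B) x j 0 *: r j.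
Proof.
move=> [Ax _]; have Au : A *m (x - xb) = 0 by rewrite mulmxBr Ax mulmx_xbar subrr.
rewrite -[x in LHS](subrK xb) (ker_sum Au) addrC; congr (_ + _).
by apply: eq_bigr => j jN; rewrite 2!mxE xbar_nonbasic // subr0.
Qed.

Variables (C : set 'cV[R]_n) (k : 'I_n).
Hypothesis reccC_PB : recc C `<=` recc P.
Hypothesis N2k : N2 B abar bbar C k.

Local Notation S := (SkC B abar bbar C k).
Local Notation beta := (beta B abar bbar C).
Local Notation N2 := (N2 B abar bbar C).
Local Notation J := (Jset B abar bbar C k).

Lemma k_nonbasic : k \in ~: B.
Proof. by case: N2k. Qed.

Lemma reccC_ker_ge0 d : recc C d -> A *m d = 0 /\ forall l, l \in ~: B -> 0 <= d l 0.
Proof.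
move=> /reccC_PB dP.
have Pxb : P (xb + 0) by apply: PB_xbarD => [|l _]; rewrite ?mulmx0 ?mxE.
have [] := dP _ Pxb 1 ler01; rewrite addr0 scale1r mulmxDr mulmx_xbar => Ad d_ge0.
split; first by apply: (addrI b); rewrite Ad addr0.
by move=> l lN; rewrite -(xbarD_nonbasic d lN) d_ge0.
Qed.

Lemma recc_SkC_of_reccC d nu : recc C d -> 0 <= nu -> recc S (d - nu *: r k).
Proof.
move=> dC nu_ge0 _ [c [mu [e [cS [mu_le0 [eC ->]]]]]] lam lam_ge0.
exists c, (mu - lam * nu), (e + lam *: d); split=> //; split.
  by have := mulr_ge0 lam_ge0 nu_ge0; lra.
split; first exact: reccD eC (reccZ lam_ge0 dC).
by apply/matrixP => p q; rewrite !mxE; ring.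
Qed.

Lemma xbar_SkC : S xb.
Proof.
have beta_k_gt0 : (0 < beta k)%E.
  by case: N2k => _ [alpha_gt0 [_ [alpha_lt_beta _]]]; exact: lt_trans alpha_lt_beta.
exists 0, 0, 0; split.
  exists 1%N, (fun=> 1), (fun=> 0); split=> //; split; first by rewrite big_ord1.
  split; last by rewrite big_ord1 scaler0.
  by move=> _; exists k, 0; rewrite scale0r.
by rewrite scale0r !addr0; split=> //; split=> //; exact: recc0.
Qed.

Lemma rbar_notin_reccC : ~ recc C (r k).
Proof.
move=> rC; have [_ [_ [alpha_fin [_ beta_fin]]]] := N2k.
have [l0 [l0_ge0 Cl0]] : exists l0, hitset B abar bbar C k l0.
  apply: contrapT => nohit; move: alpha_fin; rewrite /alpha.
  have -> : EFin @` hitset B abar bbar C k = set0.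
    by apply/seteqP; split=> // x [y hy _]; apply: nohit; exists y.
  by rewrite ereal_inf0.
have ub t : 0 <= t -> ((l0 + t)%:E <= beta k)%E.
  move=> t_ge0; apply: ereal_sup_ubound; exists (l0 + t) => //; split.
    exact: addr_ge0.
  by rewrite scalerDl addrA; exact: rC.
move: ub beta_fin (ub 0 (lexx 0)); case: (beta k) => [y| | ] //= ub _ _.
have := ub (`|y| + 1); rewrite lee_fin addr_ge0 // => /(_ isT).
by have := ler_norm y; lra.
Qed.

Definition beta_bound : R := \sum_(j < n) `|fine (beta j)|.

(* Zero off N2: this is what lets xbar + eps rbar^i0 avoid S_k^C for every eps > 0. *)
Definition seg_cap l : R := if `[< N2 l >] then beta_bound else 0.

Local Notation U := beta_bound.

Lemma beta_bound_ge0 : 0 <= U.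
Proof. exact: sumr_ge0. Qed.

Lemma seg_cap_ge0 l : 0 <= seg_cap l.
Proof. by rewrite /seg_cap; case: ifP => // _; exact: beta_bound_ge0. Qed.

Lemma seg_cap_le l : seg_cap l <= U.
Proof. by rewrite /seg_cap; case: ifP => // _; exact: beta_bound_ge0. Qed.

Lemma segs_cap v l : segs B abar bbar C v -> l \in ~: B -> 0 <= v l 0 <= seg_cap l.
Proof.
move=> [j [lam [N2j [lam_ge0 [lam_beta ->]]]]] lN.
rewrite mxE rbar_nonbasic //; case: eqVneq => [-> | _]; last first.
  by rewrite mulr0 lexx seg_cap_ge0.
rewrite mulr1 lam_ge0 /seg_cap asboolT //=.
have [_ [_ [_ [_ beta_fin]]]] := N2j.
have lam_fine : lam <= fine (beta j).
  by move: lam_beta beta_fin; case: (beta j) => //= y /ltW.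
apply: le_trans lam_fine _; rewrite /U (bigD1 j) //= (le_trans (ler_norm _)) //.
by rewrite lerDl sumr_ge0.
Qed.

Lemma convhull_segs_cap c l : convhull (segs B abar bbar C) c -> l \in ~: B ->
  0 <= c l 0 <= seg_cap l.
Proof.
move=> [p [w [y [w_ge0 [w1 [segs_y ->]]]]]] lN.
have y_cap i := segs_cap (segs_y i) lN.
rewrite summxE; under eq_bigr do rewrite mxE.
apply/andP; split.
  by apply: sumr_ge0 => i _; rewrite mulr_ge0 // (andP (y_cap i)).1.
rewrite -[seg_cap l]mul1r -w1 mulr_suml ler_sum // => i _.
by rewrite ler_wpM2l // (andP (y_cap i)).2.
Qed.

Lemma SkC_reccC_decomp x : S x -> exists2 d, recc C d & forall l, l \in ~: B ->
  x l 0 - seg_cap l <= d l 0 /\ (l != k -> d l 0 <= x l 0).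
Proof.
move=> [c [mu [d [cS [mu_le0 [dC ->]]]]]]; exists d => // l lN.
have /andP[c_ge0 c_cap] := convhull_segs_cap cS lN.
rewrite !mxE; move: lN; rewrite inE => /negbTE ->.
by case: eqVneq => [_|_]; split=> // *; lra.
Qed.

Lemma SkC_far_pair i j (L M : R) : i \in ~: B -> j \in ~: B -> i != j -> i != k ->
  seg_cap i < L -> S (xb + (L *: r i + M *: r j)) ->
  exists g, [/\ 0 <= g, seg_cap j < M -> 0 < g & recc S (r i + g *: r j)].
Proof.
move=> iN jN ij ik capL /SkC_reccC_decomp[d dC dx].
have [Ad d_ge0] := reccC_ker_ge0 dC.
have xE l : l \in ~: B ->
    (xb + (L *: r i + M *: r j)) l 0 = L * (l == i)%:R + M * (l == j)%:R.
  by move=> lN; rewrite xbarD_nonbasic // rbarD_nonbasic.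
have di_gt0 : 0 < d i 0.
  by have [] := dx i iN; rewrite xE // eqxx (negbTE ij) mulr1 mulr0 addr0; lra.
have dj_ge : M - seg_cap j <= d j 0.
  by have [] := dx j jN; rewrite xE // eqxx eq_sym (negbTE ij) mulr1 mulr0 add0r; lra.
set w := d - (d i 0 *: r i + d j 0 *: r j).
have Aw : A *m w = 0.
  by rewrite mulmxBr mulmxDr -!scalemxAr Ad !mulmx_rbar // !scaler0 addr0 subrr.
have wE l : l \in ~: B -> w l 0 = d l 0 - (d i 0 * (l == i)%:R + d j 0 * (l == j)%:R).
  by move=> lN; rewrite 2!mxE rbarD_nonbasic.
have w_supp l : l \in ~: B -> l != k -> w l 0 = 0.
  move=> lN lk; have [_ /(_ lk)] := dx l lN; rewrite wE // xE //.
  have := d_ge0 l lN; case: (eqVneq l i) => [-> | _].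
    by rewrite (negbTE ij) !mulr1 !mulr0 !addr0; lra.
  by case: (eqVneq l j) => [-> | _]; rewrite ?mulr1 ?mulr0 ?addr0 ?add0r; lra.
have wk_ge0 : 0 <= w k 0.
  rewrite wE ?k_nonbasic // eq_sym (negbTE ik).
  have := d_ge0 k k_nonbasic; rewrite mulr0 add0r.
  by case: (eqVneq k j) => [-> | _]; rewrite ?mulr1 ?mulr0; lra.
have dE : d = d i 0 *: r i + d j 0 *: r j + w k 0 *: r k.
  by rewrite -(ker_rbar Aw k_nonbasic w_supp) /w addrC subrK.
exists (d j 0 / d i 0); split.
- exact: divr_ge0 (d_ge0 j jN) (ltW di_gt0).
- by move=> capM; apply: divr_gt0 => //; lra.
have -> : r i + (d j 0 / d i 0) *: r j = (d i 0)^-1 *: (d - w k 0 *: r k).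
  rewrite [X in _ *: (X - _)]dE addrK scalerDr !scalerA mulVf ?gt_eqF //.
  by rewrite scale1r mulrC.
rewrite scalerBr scalerA; apply: recc_SkC_of_reccC.
  by apply: reccZ dC; rewrite invr_ge0 ltW.
by rewrite mulr_ge0 // invr_ge0 ltW.
Qed.

Lemma SkC_far_ray i (L : R) : i \in ~: B -> i != k -> seg_cap i < L ->
  S (xb + L *: r i) -> recc S (r i).
Proof.
move=> iN ik capL Sx.
have [|g [g_ge0 _ rg]] := SkC_far_pair (M := 0) iN k_nonbasic ik ik capL.
  by rewrite scale0r addr0.
have -> : r i = (r i + g *: r k) + (0 - g *: r k) by rewrite add0r addrK.
by apply: reccD rg _; apply: recc_SkC_of_reccC g_ge0; exact: recc0.
Qed.

Lemma notin_SkC_ray_k (L : R) : seg_cap k < L -> ~ S (xb + L *: r k).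
Proof.
move=> capL /SkC_reccC_decomp[d dC dx]; apply: rbar_notin_reccC.
have [Ad d_ge0] := reccC_ker_ge0 dC.
have xE l : l \in ~: B -> (xb + L *: r k) l 0 = L * (l == k)%:R.
  by move=> lN; rewrite xbarD_nonbasic // mxE rbar_nonbasic.
have dk_gt0 : 0 < d k 0.
  have [] := dx k k_nonbasic; rewrite xE ?k_nonbasic // eqxx mulr1.
  by have := seg_cap_ge0 k; lra.
have d_supp l : l \in ~: B -> l != k -> d l 0 = 0.
  move=> lN lk; have [_ /(_ lk)] := dx l lN; rewrite xE // (negbTE lk) mulr0.
  by have := d_ge0 l lN; lra.
suff -> : r k = (d k 0)^-1 *: d by apply: reccZ dC; rewrite invr_ge0 ltW.
rewrite [X in _ *: X](ker_rbar Ad k_nonbasic d_supp).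
by rewrite scalerA mulVf ?gt_eqF // scale1r.
Qed.

Lemma k_notin_Jset : ~ J k.
Proof.
move=> [_ rS]; apply: (@notin_SkC_ray_k (U + 1)).
  by have := seg_cap_le k; lra.
by apply: rS xbar_SkC _ _; have := beta_bound_ge0; lra.
Qed.

Lemma notin_SkC_ray j (L : R) : j \in ~: B -> ~ J j -> seg_cap j < L ->
  ~ S (xb + L *: r j).
Proof.
move=> jN notJ capL Sx; have [jk | jk] := eqVneq j k.
  by rewrite jk in capL Sx; exact: notin_SkC_ray_k capL Sx.
by apply: notJ; split=> //; exact: SkC_far_ray jN jk capL Sx.
Qed.

Local Notation T := (P `\` S).

Lemma PB_setD_SkC_ray j (L : R) : j \in ~: B -> ~ J j -> seg_cap j < L ->
  T (xb + L *: r j).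
Proof.
move=> jN notJ capL; have L_gt0 := le_lt_trans (seg_cap_ge0 j) capL.
split; last exact: notin_SkC_ray jN notJ capL.
apply: PB_xbarD; first by rewrite -scalemxAr mulmx_rbar // scaler0.
by move=> l lN; rewrite mxE rbar_nonbasic // mulr_ge0 ?ler0n ?ltW.
Qed.

Lemma M'_eq0_choice : M' B abar bbar C k = set0 -> exists sigma : 'I_n -> 'I_n,
  forall j, J j -> [/\ sigma j \in ~: B, ~ J (sigma j)
    & ~ (0 < gamma' B abar bbar C k j (sigma j))%E].
Proof.
move=> M'0; suff /choice[sigma sigmaJ] : forall j, exists s, J j ->
    [/\ s \in ~: B, ~ J s & ~ (0 < gamma' B abar bbar C k j s)%E].
  by exists sigma.
move=> j; have [Jj | notJ] := pselect (J j); last by exists j.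
have notM' : ~ M' B abar bbar C k j by rewrite M'0.
apply: contrapT => none; apply: notM'; split=> // s sN notJs.
by apply: contrapT => gamma_le0; apply: none; exists s.
Qed.

Variables (i0 : 'I_n) (sigma : 'I_n -> 'I_n).
Hypotheses (i0N : i0 \in ~: B) (i0_notJ : ~ J i0) (i0_notN2 : ~ N2 i0).
Hypothesis sigmaJ : forall j, J j -> [/\ sigma j \in ~: B, ~ J (sigma j)
  & ~ (0 < gamma' B abar bbar C k j (sigma j))%E].

Definition offset j : R := if `[< J j >] then U + 1 else 0.

Lemma PB_setD_SkC_far j (L : R) : j \in ~: B -> U < L ->
  T (xb + (L *: r j + offset j *: r (sigma j))).
Proof.
move=> jN UL; have capL := le_lt_trans (seg_cap_le j) UL.
rewrite /offset; case: (asboolP (J j)) => [Jj | notJ]; last first.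
  by rewrite scale0r addr0; exact: PB_setD_SkC_ray.
have [sjN notJs gamma_le0] := sigmaJ Jj.
have L_gt0 : 0 < L by apply: le_lt_trans UL; exact: beta_bound_ge0.
split.
  apply: PB_xbarD; first by rewrite mulmxDr -!scalemxAr !mulmx_rbar // !scaler0 addr0.
  move=> l lN; rewrite rbarD_nonbasic // addr_ge0 // mulr_ge0 ?ler0n ?ltW //.
  by have := beta_bound_ge0; lra.
move=> Sx; have js : j != sigma j by apply/eqP => e; move: notJs; rewrite -e.
have jk : j != k by apply/eqP => e; move: Jj; rewrite e; exact: k_notin_Jset.
have capU : seg_cap (sigma j) < U + 1.
  by apply: le_lt_trans (seg_cap_le _) _; rewrite ltrDl.
have [g [_ /(_ capU) g_gt0 rg]] := SkC_far_pair jN sjN js jk capL Sx.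
apply: gamma_le0; apply: (@lt_le_trans _ _ g%:E); first by rewrite lte_fin.
by apply: ereal_sup_ubound; exists g => //; split=> //; exact: ltW.
Qed.

Definition approx_dir (x : 'cV[R]_n) : 'cV[R]_n :=
  \sum_(j in ~: B) (x j 0 * offset j) *: r (sigma j) + r i0.

Lemma convhull_PB_setD_SkC_approx x (L : R) : P x ->
  U + \sum_(j in ~: B) x j 0 < L -> convhull T (x + L^-1 *: approx_dir x).
Proof.
move=> Px; set s := \sum_(j in ~: B) x j 0 => UsL.
have x_ge0 : forall j, j \in ~: B -> 0 <= x j 0 := Px.2.
have s_ge0 : 0 <= s by exact: sumr_ge0.
have U_ge0 := beta_bound_ge0.
have L_gt0 : 0 < L by lra.
have Ls_gt0 : 0 < L - s by lra.
pose far j := xb + (L *: r j + offset j *: r (sigma j)).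
pose e := xb + (L - s)^-1 *: r i0.
have Te : T e by apply: PB_setD_SkC_ray => //; rewrite /seg_cap asboolF // invr_gt0.
suff -> : x + L^-1 *: approx_dir x =
    \sum_(j in ~: B) (x j 0 / L) *: far j + (1 - s / L) *: e.
  have := convhull_sum_add_point (X := T)
    (w := fun j => (if j \in ~: B then x j 0 else 0) / L)
    (y := fun j => if j \in ~: B then far j else e) (w0 := 1 - s / L) (y0 := e).
  have -> : \sum_j (if j \in ~: B then x j 0 else 0) / L = s / L.
    by rewrite -mulr_suml -big_mkcond.
  rewrite [X in convhull _ (X + _)](_ : _ = \sum_(j in ~: B) (x j 0 / L) *: far j).
    apply.
    - move=> j; case: ifP => [/x_ge0 xj | _]; last by rewrite mul0r.
      exact: divr_ge0 xj (ltW L_gt0).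
    - by rewrite subr_ge0 ler_pdivrMr // mul1r; lra.
    - by rewrite addrC subrK.
    - move=> j; case: ifP => // jN; apply: PB_setD_SkC_far => //.
      by apply: le_lt_trans UsL; rewrite lerDl.
    - exact: Te.
  by rewrite [RHS]big_mkcond; apply: eq_bigr => j _; case: ifP; rewrite ?mul0r ?scale0r.
have farE j : (x j 0 / L) *: far j = (x j 0 / L) *: xb +
    (x j 0 *: r j + L^-1 *: ((x j 0 * offset j) *: r (sigma j))).
  rewrite /far !scalerDr !scalerA divfK ?gt_eqF //; congr (_ + (_ + _)).
  by congr (_ *: _); rewrite mulrAC mulrC.
have eE : (1 - s / L) *: e = (1 - s / L) *: xb + L^-1 *: r i0.
  by rewrite /e scalerDr scalerA; congr (_ + _ *: _); field; rewrite !gt_eqF.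
under eq_bigr do rewrite farE.
rewrite !big_split /= -scaler_suml -mulr_suml -/s -scaler_sumr eE /approx_dir.
rewrite {1}(PB_sum Px).
by apply/matrixP => p q; rewrite !mxE; ring.
Qed.

Lemma PB_sub_closure_convhull : P `<=` closure (convhull T).
Proof.
move=> x Px; apply: (@closure_shrinking_ray _ _ _ x (approx_dir x)
  (U + \sum_(j in ~: B) x j 0)) => L; exact: convhull_PB_setD_SkC_approx.
Qed.

End Tableau.

Theorem proposition10 (R : realType) (m n : nat)
  (A : 'M[R]_(m, n)) (b : 'cV[R]_m)
  (B : {set 'I_n}) (abar : 'I_n -> 'I_n -> R) (bbar : 'I_n -> R)
  (C : set 'cV[R]_n) (k : 'I_n) :
  \rank A = m ->
  #|B| = m ->
  (forall i, i \in B -> 0 <= bbar i) ->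
  (forall x : 'cV[R]_n, A *m x = b <->
     (forall i, i \in B ->
        x i 0 = bbar i - \sum_(j in ~: B) abar i j * x j 0)) ->
  open C ->
  convex_set (C : set (convex_lmodType 'cV[R]_n)) ->
  ~ closure C (xbar B bbar) ->
  recc C `<=` recc (PB B A b) ->
  N2 B abar bbar C k ->
  ~ (N0 B abar bbar C `<=` Jset B abar bbar C k) ->
  M' B abar bbar C k = set0 ->
  closure (convhull (PB B A b `\` SkC B abar bbar C k)) = PB B A b.
Proof.
move=> _ _ _ tableauP _ _ _ reccC_PB N2k /nonsubset[i0 [[i0N [alpha_oo _]] i0_notJ]].
have i0_notN2 : ~ N2 B abar bbar C i0 by case=> _ [_ []]; rewrite alpha_oo ltxx.
move=> /M'_eq0_choice[sigma sigmaJ].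
apply/seteqP; split; first by apply: closure_convhull_PB => x [].
exact: (PB_sub_closure_convhull tableauP reccC_PB N2k i0N i0_notJ i0_notN2 sigmaJ).
Qed.
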